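(* For every integer $k \geq 2$, the polynomial $$p_k(x) = x^{2k-1} - x^{k} - x^{k-1} - 1$$ is irreducible over $\mathbb{Q}$ (equivalently, since it is monic with integer coefficients, over $\mathbb{Z}$).
   Context: The polynomials $p_k(x)=x^{2k-1}-x^k-x^{k-1}-1$, $k\ge 2$, are called Liechti–Strenner's polynomials. *)

From HB Require Import structures.
From mathcomp Require Import all_boot all_order all_algebra.
Set Implicit Arguments. Unset Strict Implicit. Unset Printing Implicit Defensive.
Import Order.TTheory GRing.Theory Num.Theory.
Local Open Scope ring_scope.

Definition liechti_strenner (k : nat) : {poly rat} :=
  'X^(2 * k - 1) - 'X^k - 'X^(k - 1) - 1.

From HB Require Import structures.
From mathcomp Require Import all_boot all_order all_algebra.
From mathcomp Require Import zify ring.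
Set Implicit Arguments. Unset Strict Implicit. Unset Printing Implicit Defensive.
Import GRing.Theory Num.Theory.
Local Open Scope ring_scope.

(* Work over the integers; Gauss's lemma transfers irreducibility to Q.  Let
   P = p_k, n = 2k - 1 and P^* = x^n P(1/x).  If P = g h with both factors
   nonconstant, then w := g h^* satisfies w w^* = P P^* (Ljunggren's trick).
   The coefficient of x^n of w w^* is the sum of the squares of the
   coefficients of w, so it equals that of P, namely 4; as the extreme
   coefficients of w are units, w is a quadrinomial with coefficients +-1.
   Comparing further coefficients of
   w w^* = P P^* = - x^(2n) + x^(n+1) + 4 x^n + x^(n-1) - 1
   forces w = +-P or w = +-P^*, hence h^* = +-h or g^* = +-g, and either way
   P and P^* have a nonconstant common divisor.  But such a divisor divides
   P + P^* = -2 x^(k-1) (x + 1) and P - P^* = 2 (x^n - 1), so it is coprime to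
   x, associate to x + 1, and x + 1 does not divide x^n - 1 since n is odd. *)

Section Reciprocal.
Variable R : comNzRingType.
Implicit Types p q g h : {poly R}.

(* The reciprocal x^n p(1/x); coefficients of [p] above degree [n] are dropped. *)
Definition recip n p : {poly R} := \poly_(i < n.+1) p`_(n - i).

Lemma coef_recip n p i : (recip n p)`_i = if (i <= n)%N then p`_(n - i) else 0.
Proof. by rewrite coef_poly ltnS. Qed.

Fact recip_is_semilinear n : semilinear (recip n).
Proof.
by split=> [c p|p q]; apply/polyP=> i; rewrite !(coef_recip, coefZ, coefD);
  case: leqP; rewrite ?mulr0 ?addr0.
Qed.
HB.instance Definition _ n := GRing.isSemilinear.Build R {poly R} {poly R} _
  (recip n) (recip_is_semilinear n).

Lemma recipXn n i : (i <= n)%N -> recip n 'X^i = 'X^(n - i).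
Proof.
move=> le_in; apply/polyP=> j; rewrite coef_recip !coefXn.
case: leqP => [le_jn|lt_nj]; first by congr (_%:R); apply/eqP/eqP; lia.
by rewrite (_ : (j == n - i)%N = false) //; apply/eqP; lia.
Qed.

Lemma recipK n p : (size p <= n.+1)%N -> recip n (recip n p) = p.
Proof.
move=> sp; apply/polyP=> i; rewrite !coef_recip leq_subr.
by case: leqP => [le_in|lt_ni]; rewrite ?subKn // nth_default // (leq_trans sp).
Qed.

Lemma poly_sum_coefXn n p : (size p <= n)%N -> p = \sum_(i < n) p`_i *: 'X^i.
Proof. by move=> sp; rewrite -poly_def -[LHS](take_poly_id sp). Qed.

Lemma recip_sum_coefXn n p : (size p <= n.+1)%N ->
  recip n p = \sum_(i < n.+1) p`_i *: 'X^(n - i).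
Proof.
move=> /poly_sum_coefXn {1}->; rewrite linear_sum; apply: eq_bigr => i _.
by rewrite linearZ /= recipXn // -ltnS.
Qed.

Lemma recipM m n p q : (size p <= m.+1)%N -> (size q <= n.+1)%N ->
  recip (m + n) (p * q) = recip m p * recip n q.
Proof.
move=> sp sq; rewrite (recip_sum_coefXn sp) (recip_sum_coefXn sq).
rewrite {1}(poly_sum_coefXn sp) {1}(poly_sum_coefXn sq) !mulr_suml linear_sum.
apply: eq_bigr => i _; rewrite !mulr_sumr linear_sum; apply: eq_bigr => j _.
have le_im : (i <= m)%N := ltn_ord i; have le_jn : (j <= n)%N := ltn_ord j.
rewrite -!scalerAr -!scalerAl !linearZ /= -!exprD recipXn ?leq_add //.
by rewrite !scalerA mulrC; congr (_ *: 'X^_); lia.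
Qed.

Lemma coef_mul_recip n p : (p * recip n p)`_n = \sum_(i < n.+1) p`_i ^+ 2.
Proof.
rewrite coefM; apply: eq_bigr => i _.
by rewrite coef_recip leq_subr subKn ?expr2 // -ltnS.
Qed.

Lemma coef_mulZXn (a b : R) i j t :
  ((a *: 'X^i) * (b *: 'X^j))`_t = a * b * (t == i + j)%:R.
Proof. by rewrite -scalerAl -scalerAr scalerA -exprD coefZ coefXn. Qed.

Lemma mul_recip_swap m n g h : (size g <= m.+1)%N -> (size h <= n.+1)%N ->
  let w := g * recip n h in w * recip (m + n) w = (g * h) * recip (m + n) (g * h).
Proof. by move=> sg sh w; rewrite !recipM ?size_poly // recipK // {}/w; ring. Qed.

End Reciprocal.

Section ReciprocalIdomain.
Variable R : idomainType.
Implicit Types p : {poly R}.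

Lemma size_recip n p : p`_0 != 0 -> size (recip n p) = n.+1.
Proof. by move=> p0; rewrite size_poly_eq // subnn. Qed.

Lemma lead_coef_recip n p : p`_0 != 0 -> lead_coef (recip n p) = p`_0.
Proof. by move=> p0; rewrite lead_coefE size_recip // coef_recip leqnn subnn. Qed.

End ReciprocalIdomain.

Lemma eqp_oppl (R : idomainType) (p : {poly R}) : - p %= p.
Proof. by rewrite -scaleN1r eqp_scale // oppr_eq0 oner_eq0. Qed.

Lemma int_unitE (x : int) : (x \is a GRing.unit) = (x ^+ 2 == 1).
Proof. by rewrite sqrf_eq1. Qed.

Lemma int_unitP (x : int) : x \is a GRing.unit -> x = 1 \/ x = -1.
Proof. by rewrite int_unitE sqrf_eq1 => /orP[]/eqP->; [left|right]. Qed.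

Lemma sqr_int_le2 (x : int) : x != 0 -> x ^+ 2 <= 2 -> x ^+ 2 = 1.
Proof.
rewrite expr2 => /eqP x_neq0 sqx_le2.
have [->|->] : x = -1 \/ x = 1 by nia.
all: by [].
Qed.

Lemma sumsq_int_pick (I : finType) (P : pred I) (F : I -> int) s : (s <= 1)%N ->
  \sum_(i | P i) F i ^+ 2 = s.+1%:R ->
  exists2 b, P b & F b \is a GRing.unit /\ \sum_(i | P i && (i != b)) F i ^+ 2 = s%:R.
Proof.
move=> s_le1 sumF.
have [b Pb Fb_neq0] : exists2 b, P b & F b != 0.
  case: (pickP [pred i | P i && (F i != 0)]) => [b /andP[Pb Fb]|F0]; first by exists b.
  suff : \sum_(i | P i) F i ^+ 2 = 0 by rewrite sumF => /eqP; rewrite pnatr_eq0.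
  rewrite big1 // => i Pi.
  by move: (F0 i); rewrite /= Pi => /negbFE/eqP->; rewrite expr0n.
move: sumF; rewrite (bigD1 b) //= => sumF.
set rest := \sum_(i | _) _ in sumF *.
have rest_ge0 : 0 <= rest by apply: sumr_ge0 => i _; apply: sqr_ge0.
have Fb1 : F b ^+ 2 = 1.
  by apply: sqr_int_le2 => //; move: sumF; rewrite natz; lia.
exists b => //; split; first by rewrite int_unitE Fb1.
by apply: (addrI (F b ^+ 2)); rewrite sumF Fb1 addrC natr1.
Qed.

Lemma sumsq_int_eq2 (I : finType) (F : I -> int) : \sum_i F i ^+ 2 = 2 ->
  exists b c, [/\ b != c, F b \is a GRing.unit, F c \is a GRing.unit &
                  forall i, i != b -> i != c -> F i = 0].
Proof.
move=> sumF.
have [b _ [Fb sum_b]] := @sumsq_int_pick I predT F 1 (leqnn 1) sumF.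
have [c c_neq_b [Fc sum_bc]] := @sumsq_int_pick I (predC1 b) F 0 (leq0n 1) sum_b.
exists b, c; split; rewrite 1?eq_sym // => i ib ic.
apply/eqP; rewrite -sqrf_eq0; apply/eqP.
by apply: (psumr_eq0P _ sum_bc) => [j _|]; rewrite ?sqr_ge0 //= ib ic.
Qed.

Ltac decide_nat_eqs :=
  repeat match goal with
  | |- context [?x == ?y] =>
      let T := type of x in unify T nat;
      first [ rewrite (_ : (x == y) = true); last by apply/eqP; lia
            | rewrite (_ : (x == y) = false); last by apply/eqP; lia ]
  end; rewrite /= ?mulr1n ?mulr0n ?mulr1 ?mulr0 ?addr0 ?add0r ?subr0 ?sub0r.

Lemma int_poly_sumsq4 n (w : {poly int}) : (0 < n)%N -> (size w <= n.+1)%N ->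
  w`_0 \is a GRing.unit -> w`_n \is a GRing.unit -> \sum_(i < n.+1) w`_i ^+ 2 = 4 ->
  exists b c, [/\ (0 < c < b)%N, (b < n)%N,
    w`_b \is a GRing.unit /\ w`_c \is a GRing.unit &
    w = w`_n *: 'X^n + w`_b *: 'X^b + w`_c *: 'X^c + w`_0 *: 'X^0].
Proof.
case: n => // m _ sw w0 wn.
rewrite big_ord_recl big_ord_recr /=.
move: (w0) (wn); rewrite !int_unitE => /eqP-> /eqP-> sumw.
have sum_mid : \sum_(i < m) w`_i.+1 ^+ 2 = 2.
  by apply: (addrI 1); apply: (addIr 1); rewrite -addrA sumw.
have [b [c [b_neq_c wb wc w_mid0]]] := sumsq_int_eq2 sum_mid.
have wE : w = w`_m.+1 *: 'X^(m.+1) + w`_b.+1 *: 'X^(b.+1) + w`_c.+1 *: 'X^(c.+1)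
             + w`_0 *: 'X^0.
  have [lt_bm lt_cm] := (ltn_ord b, ltn_ord c).
  move: b_neq_c; rewrite -val_eqE /= => b_neq_c.
  apply/polyP=> t; rewrite !coefE.
  have [lt_mt|le_tm] := ltnP m.+1 t.
    by rewrite nth_default ?(leq_trans sw) //; decide_nat_eqs.
  case: t le_tm => [|t] le_tm; first by decide_nat_eqs.
  have [->|t_neq_m] := eqVneq t m; first by decide_nat_eqs.
  have [->|t_neq_b] := eqVneq t b; first by decide_nat_eqs.
  have [->|t_neq_c] := eqVneq t c; first by decide_nat_eqs.
  have lt_tm : (t < m)%N by lia.
  by rewrite (w_mid0 (Ordinal lt_tm)) -?val_eqE //=; decide_nat_eqs.
have [lt_bc|lt_cb|/val_inj b_eq_c] := ltngtP b c.
- exists (c.+1), (b.+1); split=> //; first exact: ltn_ord.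
  by rewrite {1}wE; congr (_ + _); apply: addrAC.
- by exists (b.+1), (c.+1); split=> //; apply: ltn_ord.
- by rewrite b_eq_c eqxx in b_neq_c.
Qed.

Definition liechti_strennerZ (k : nat) : {poly int} :=
  'X^(2 * k - 1) - 'X^k - 'X^(k - 1) - 1.

Lemma liechti_strennerE k :
  liechti_strenner k = map_poly (intr : int -> rat) (liechti_strennerZ k).
Proof. by rewrite !rmorphB /= !map_polyXn rmorph1. Qed.

Section LiechtiStrenner.

Variable k : nat.
Hypothesis k_gt1 : (1 < k)%N.

Local Notation n := (2 * k - 1)%N.
Local Notation P := (liechti_strennerZ k).

Lemma coef_liechti_strennerZ i :
  P`_i = (i == n)%:R - (i == k)%:R - (i == (k - 1)%N)%:R - (i == 0)%N%:R.
Proof. by rewrite !coefE. Qed.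

Lemma size_liechti_strennerZ : size P = n.+1.
Proof.
apply/eqP; rewrite eqn_leq; apply/andP; split.
  by apply/leq_sizeP => j le_nj; rewrite coef_liechti_strennerZ; decide_nat_eqs.
rewrite ltnNge; apply/negP => /leq_sizeP/(_ n (leqnn n))/eqP.
by rewrite coef_liechti_strennerZ; decide_nat_eqs; rewrite oner_eq0.
Qed.

Lemma lead_coef_liechti_strennerZ : lead_coef P = 1.
Proof.
by rewrite lead_coefE size_liechti_strennerZ coef_liechti_strennerZ; decide_nat_eqs.
Qed.

Lemma coef0_liechti_strennerZ : P`_0 = -1.
Proof. by rewrite coef_liechti_strennerZ; decide_nat_eqs. Qed.

Lemma recip_liechti_strennerZ : recip n P = 1 - 'X^(k - 1) - 'X^k - 'X^n.
Proof.
rewrite !linearB /= -(expr0 'X) !recipXn; [|lia..].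
rewrite subnn subn0 (_ : n - k = k - 1)%N; last by lia.
by rewrite (_ : n - (k - 1) = k)%N; last by lia.
Qed.

Lemma mul_recip_liechti_strennerZ :
  P * recip n P = - 'X^(n + n) + 'X^(n.+1) + 4 *: 'X^n + 'X^(n.-1) - 1.
Proof.
rewrite recip_liechti_strennerZ /liechti_strennerZ.
have [j ->] : exists j, k = j.+2 by exists (k - 2)%N; lia.
rewrite (_ : (2 * j.+2 - 1 = j.+1 + j.+2)%N); last by lia.
rewrite (_ : (j.+1 + j.+2).-1 = j.+1 + j.+1)%N; last by lia.
rewrite (_ : (j.+1 + j.+2).+1 = j.+2 + j.+2)%N; last by lia.
rewrite subSS subn0 !exprD !exprS scaler_nat.
ring.
Qed.

Lemma common_dvdp_recip_liechti_strennerZ f :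
  f %| P -> f %| recip n P -> (size f <= 1)%N.
Proof.
move=> fP fPr; rewrite leqNgt; apply/negP => size_f_gt1.
have f0_neq0 : ~~ root f 0.
  apply/negP => /(root_dvdp fP).
  by rewrite /root horner_coef0 coef0_liechti_strennerZ oppr_eq0 oner_eq0.
have X1_neq0 : 'X + 1 != 0 :> {poly int}.
  by rewrite -size_poly_eq0 -polyC1 size_XaddC.
have f_dvd_X1 : f %| 'X + 1.
  have sumE : P + recip n P = (-2) *: ('X^(k - 1) * ('X + 1)).
    rewrite recip_liechti_strennerZ /liechti_strennerZ.
    have [j ->] : exists j, k = j.+1 by exists (k - 1)%N; lia.
    by rewrite subSS subn0 exprS scaleNr scaler_nat; ring.
  have coprime_fX : coprimep f 'X^(k - 1).
    by apply: coprimep_expr; rewrite -['X]subr0 -polyC0 coprimep_XsubC.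
  rewrite -(Gauss_dvdpr _ coprime_fX) -(dvdpZr _ _ (_ : -2 != 0)) //.
  by rewrite -sumE dvdp_add.
have f_eqp : f %= 'X + 1.
  rewrite -dvdp_size_eqp // -polyC1 size_XaddC eqn_leq size_f_gt1 andbT.
  by rewrite -(size_XaddC (1 : int)) polyC1 dvdp_leq.
have : f %| 'X^n - 1.
  have diffE : P - recip n P = 2 *: ('X^n - 1).
    by rewrite recip_liechti_strennerZ /liechti_strennerZ scaler_nat; ring.
  by rewrite -(dvdpZr _ _ (_ : 2 != 0)) // -diffE dvdp_sub.
rewrite (eqp_dvdl _ f_eqp) (_ : 'X + 1 = 'X - (-1)%:P); last by rewrite polyCN opprK.
rewrite dvdp_XsubCl /root !hornerE (_ : n = (2 * (k - 1)).+1); last by lia.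
by rewrite exprS exprM sqrrN !expr1n.
Qed.

Lemma quadrinomial_eqp_liechti_strennerZ w (e1 e2 e3 e4 : int) b c :
  [/\ e1 \is a GRing.unit, e2 \is a GRing.unit, e3 \is a GRing.unit
     & e4 \is a GRing.unit] ->
  (0 < c < b)%N -> (b < n)%N ->
  w = e1 *: 'X^n + e2 *: 'X^b + e3 *: 'X^c + e4 *: 'X^0 ->
  w * recip n w = P * recip n P -> (w %= P) \/ (w %= recip n P).
Proof.
move=> [u1 u2 u3 u4] /andP[c_gt0 lt_cb] lt_bn wE0 ww.
have recip_w :
    recip n w = e1 *: 'X^0 + e2 *: 'X^(n - b) + e3 *: 'X^(n - c) + e4 *: 'X^n.
  by rewrite wE0 !linearD !linearZ /= !recipXn ?subnn ?subn0; [|lia..].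
have coefs_eq t : (P * recip n P)`_t =
  ((e1 *: 'X^n + e2 *: 'X^b + e3 *: 'X^c + e4 *: 'X^0) *
   (e1 *: 'X^0 + e2 *: 'X^(n - b) + e3 *: 'X^(n - c) + e4 *: 'X^n))`_t.
  by rewrite -ww recip_w {1}wE0.
(* The coefficient at x^(2n) and the value at 1 give e4 = -e1 and e3 = e2; then
   the coefficients at x^(2n-c) and x^(n+1) give b + c = n and b = c + 1. *)
have coef_2n := coefs_eq (n + n).
rewrite mul_recip_liechti_strennerZ !mulrDl !mulrDr !coefD !coef_mulZXn !coefE in coef_2n.
move: coef_2n; decide_nat_eqs => coef_2n.
have value_1 := congr1 (horner^~ 1) ww.
rewrite /= hornerM recip_w {1}wE0 mul_recip_liechti_strennerZ in value_1.
rewrite !hornerE !expr1n !mulr1 in value_1.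
have [e4E e3E] : e4 = - e1 /\ e3 = e2.
  move: coef_2n value_1.
  by case: (int_unitP u1) (int_unitP u2) (int_unitP u3) (int_unitP u4)
    => -> [] -> [] -> [] ->; lia.
subst e4 e3.
have coef_2n_c := coefs_eq (n + n - c)%N.
rewrite mul_recip_liechti_strennerZ !mulrDl !mulrDr !coefD !coef_mulZXn !coefE in coef_2n_c.
move: coef_2n_c; decide_nat_eqs => coef_2n_c.
have sum_bc : (b + c = n)%N.
  move: coef_2n_c; have [|_] := eqVneq (n + n - c)%N (b + n)%N; first by lia.
  by rewrite mulr0 addr0; case: (int_unitP u1) (int_unitP u2) => -> [] ->; lia.
have coef_n1 := coefs_eq n.+1.
rewrite mul_recip_liechti_strennerZ !mulrDl !mulrDr !coefD !coef_mulZXn !coefE in coef_n1.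
move: coef_n1; decide_nat_eqs => coef_n1.
have [b_eq c_eq] : b = k /\ c = (k - 1)%N.
  move: coef_n1; case: (int_unitP u1) (int_unitP u2) => -> [] ->;
  by repeat (case: eqP => ?; rewrite /= ?mulr1n ?mulr0n ?mulr0 ?mulr1); lia.
subst b c.
have wE : w = e1 *: ('X^n - 1) + e2 *: ('X^k + 'X^(k - 1)).
  by rewrite wE0 scaleNr expr0 scalerBr scalerDr; ring.
suff : (w = P \/ w = - P) \/ (w = recip n P \/ w = - recip n P).
  by case=> [[]|[]] ->; [left|left|right|right]; rewrite ?eqp_oppl ?eqpxx.
rewrite wE recip_liechti_strennerZ /liechti_strennerZ.
case: (int_unitP u1) (int_unitP u2) => -> [] ->; rewrite ?scaleN1r ?scale1r.
- by right; right; ring.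
- by left; left; ring.
- by left; right; ring.
- by right; left; ring.
Qed.

Lemma factor_swap_eqp_liechti_strennerZ g h m1 m2 :
  P = g * h -> size g = m1.+1 -> size h = m2.+1 ->
  (g * recip m2 h %= P) \/ (g * recip m2 h %= recip n P).
Proof.
move=> Pgh sg sh.
have [g0 h0] : g != 0 /\ h != 0 by rewrite -!size_poly_eq0 sg sh.
have m12 : (m1 + m2)%N = n.
  by have := size_liechti_strennerZ; rewrite Pgh size_mul // sg sh; lia.
have /andP[ulg ulh] : (lead_coef g \is a GRing.unit) && (lead_coef h \is a GRing.unit).
  by rewrite -unitrM -lead_coefM -Pgh lead_coef_liechti_strennerZ unitr1.
have /andP[ug0 uh0] : (g`_0 \is a GRing.unit) && (h`_0 \is a GRing.unit).
  by rewrite -unitrM -coef0M -Pgh coef0_liechti_strennerZ unitrN1.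
have h0_neq0 : h`_0 != 0 by apply: contraTneq uh0 => ->; rewrite unitr0.
set w := g * recip m2 h.
have ww : w * recip n w = P * recip n P by rewrite -m12 Pgh mul_recip_swap ?sg ?sh.
have sw : size w = n.+1.
  by rewrite size_mul ?sg ?size_recip // -?size_poly_eq0 ?size_recip //; lia.
have uw0 : w`_0 \is a GRing.unit.
  by rewrite coef0M coef_recip subn0 unitrM ug0 -[m2]/(m2.+1.-1) -sh -lead_coefE.
have uwn : w`_n \is a GRing.unit.
  by rewrite -[n]/(n.+1.-1) -sw -lead_coefE lead_coefM lead_coef_recip // unitrM ulg.
have sumsq_w : \sum_(i < n.+1) w`_i ^+ 2 = 4.
  by rewrite -coef_mul_recip ww mul_recip_liechti_strennerZ !coefE; decide_nat_eqs.
have [|b [c [lt_cb lt_bn [ub uc] wE]]] := int_poly_sumsq4 _ (eq_leq sw) uw0 uwn sumsq_w.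
  by lia.
exact: quadrinomial_eqp_liechti_strennerZ (And4 uwn ub uc uw0) lt_cb lt_bn wE ww.
Qed.

Lemma liechti_strennerZ_factor g h :
  P = g * h -> (size g <= 1)%N \/ (size h <= 1)%N.
Proof.
move=> Pgh; case: (leqP (size g) 1) => [|sg_gt1]; first by left.
case: (leqP (size h) 1) => [|sh_gt1]; first by right.
have [m1 sg] : exists m1, size g = m1.+1 by exists (size g).-1; lia.
have [m2 sh] : exists m2, size h = m2.+1 by exists (size h).-1; lia.
have [g0 recip_h0] : g != 0 /\ recip m2 h != 0.
  rewrite -!size_poly_eq0 sg size_recip //.
  by apply: contraTneq isT => h0; have := coef0_liechti_strennerZ; rewrite Pgh coef0M h0 mulr0.
have recipP : recip n P = recip m1 g * recip m2 h.
  have m12 : (m1 + m2)%N = n.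
    by have := size_liechti_strennerZ; rewrite Pgh size_mul -?size_poly_eq0 ?sg ?sh //; lia.
  by rewrite -m12 Pgh recipM ?sg ?sh.
have [wP|wPr] := factor_swap_eqp_liechti_strennerZ Pgh sg sh; exfalso.
- have recip_h : recip m2 h %= h by rewrite -(eqp_mul2l _ _ g0) -Pgh.
  suff : (size h <= 1)%N by lia.
  apply: common_dvdp_recip_liechti_strennerZ; first by rewrite Pgh dvdp_mulIr.
  by rewrite recipP dvdp_mull // (eqp_dvdr _ recip_h).
- have recip_g : g %= recip m1 g by rewrite -(eqp_mul2r _ _ recip_h0) -recipP.
  suff : (size g <= 1)%N by lia.
  apply: common_dvdp_recip_liechti_strennerZ; first by rewrite Pgh dvdp_mulIl.
  by rewrite recipP dvdp_mulr // -(eqp_dvdr _ recip_g).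
Qed.

End LiechtiStrenner.

Theorem theorem1p1 (k : nat) : (2 <= k)%N -> irreducible_poly (liechti_strenner k).
Proof.
move=> k_gt1; rewrite liechti_strennerE; apply/irreducible_rat_int.
split=> [|q size_q /dvdpP_int[r Pqr]]; first by rewrite size_liechti_strennerZ //; lia.
have P0 : liechti_strennerZ k != 0 by rewrite -size_poly_eq0 size_liechti_strennerZ.
have q0 : q != 0 by apply: contraNneq P0 => q0; rewrite Pqr q0 zprimitive0 mul0r.
have [|size_r] := liechti_strennerZ_factor k_gt1 Pqr.
  rewrite size_zprimitive => size_q_le1.
  by case/negP: size_q; rewrite eqn_leq size_q_le1 size_poly_gt0.
have r0 : r`_0 != 0.
  by apply: contraNneq P0 => r0; rewrite Pqr (size1_polyC size_r) r0 mulr0.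
rewrite Pqr (size1_polyC size_r) mulrC mul_polyC eqp_sym.
apply: eqp_trans (eqp_scale _ r0) _.
by rewrite {2}[q]zpolyEprim eqp_sym eqp_scale ?zcontents_eq0.
Qed.
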